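(* For every positive integer $n$, $$M_e(\mathcal{D},n)-M_o(\mathcal{D},n)=\begin{cases} 1, & \text{if } n\in\mathcal{P} \text{ and } R(n) \text{ is odd and positive},\\ -1, & \text{if } n\in\mathcal{P} \text{ and } R(n) \text{ is not odd and positive},\\ 2, & \text{if } n\notin\mathcal{P},\ R(\lfloor n\rfloor_p) \text{ is odd and positive, and } n\equiv\lfloor n\rfloor_p \pmod 2,\\ -2, & \text{if } n\notin\mathcal{P},\ R(\lfloor n\rfloor_p) \text{ is even and positive, and } n\equiv\lfloor n\rfloor_p \pmod 2,\\ -2(-1)^{n-\lfloor n\rfloor_p}, & \text{if } n\notin\mathcal{P} \text{ and } R(\lfloor n\rfloor_p) \text{ is even and negative},\\ 0, & \text{otherwise}. \end{cases}$$
   Context: $M_e(\mathcal{D},n)$ (resp. $M_o(\mathcal{D},n)$) is the number of partitions of $n$ into distinct parts with even (resp. odd) crank, where for a partition into distinct parts the crank is its largest part if $1$ is not a part, and is (number of parts) $-2$ if $1$ is a part. $\mathcal{P}=\{m(3m+1)/2: m\in\mathbb{Z}\}$ is the set of (generalized) pentagonal numbers; for $n=m(3m+1)/2\in\mathcal{P}$ put $R(n)=m$ (well defined since distinct integers $m$ give distinct values). $\lfloor n\rfloor_p$ denotes the largest element of $\mathcal{P}$ that is $\le n$. *)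

From HB Require Import structures.
From mathcomp Require Import all_boot all_order all_algebra.
Set Implicit Arguments. Unset Strict Implicit. Unset Printing Implicit Defensive.
Import Order.TTheory GRing.Theory Num.Theory.

(* A partition of n into distinct parts is a set S of positive integers
   (encoded as elements of 'I_n.+1, all parts are <= n) whose sum is n. *)
Definition distinct_partition (n : nat) (S : {set 'I_n.+1}) : bool :=
  (ord0 \notin S) && (\sum_(i in S) (i : nat) == n)%N.

Definition largest_part (n : nat) (S : {set 'I_n.+1}) : nat := \max_(i in S) (i : nat).
Definition has_one (n : nat) (S : {set 'I_n.+1}) : bool := [exists i in S, (i : nat) == 1%N].

Definition dcrank (n : nat) (S : {set 'I_n.+1}) : int :=
  if has_one S then (Posz #|S| - 2)%R else Posz (largest_part S).

Definition Me (n : nat) : nat :=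
  #|[set S : {set 'I_n.+1} | distinct_partition S & ~~ odd `|dcrank S|%N]|.
Definition Mo (n : nat) : nat :=
  #|[set S : {set 'I_n.+1} | distinct_partition S & odd `|dcrank S|%N]|.

(* generalized pentagonal number m(3m+1)/2, m in Z (always a natural number) *)
Definition pent (m : int) : nat := (`|(m * (3 * m + 1))%R|%N %/ 2)%N.

(** Splitting on whether 1 is a part, the signed count M_e - M_o of n+1 is
    A(n+1) - F(n), where A(n) and F(n) sum (-1)^(largest part) and
    (-1)^(number of parts) over the partitions of n into distinct parts other
    than 1: adjoining the part 1 maps these bijectively onto the partitions of
    n+1 containing 1, keeping the largest part and adding one part.  The same
    splitting of the unrestricted sums X(n) and Y(n) gives
    X(n+1) = A(n+1) + A(n) (up to a correction from the empty partition) and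
    Y(n+1) = F(n+1) - F(n).  Franklin's involution reverses both signs, so X
    and Y vanish off the generalized pentagonal numbers and are +-1 on them.
    Solving the two recurrences gives A and F in closed form on each interval
    between consecutive pentagonal numbers, and the theorem is read off. *)

From mathcomp Require Import all_boot all_order all_algebra.
From mathcomp Require Import zify ring.
Import Order.TTheory GRing.Theory Num.Theory.
Set Implicit Arguments. Unset Strict Implicit. Unset Printing Implicit Defensive.

Lemma gtn_trans : transitive gtn.
Proof. by move=> a b c /= ba cb; apply: ltn_trans cb ba. Qed.

Lemma sumn_mkseq f m : sumn (mkseq f m) = \sum_(i < m) f i.
Proof. by rewrite /mkseq sumnE big_map -(big_mkord xpredT) /index_iota subn0. Qed.

Lemma sumn_nth l : sumn l = \sum_(i < size l) nth 0 l i.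
Proof. by rewrite -{1}(mkseq_nth 0 l) sumn_mkseq. Qed.

Lemma sum_ltn m s : s <= m -> \sum_(i < m) (i < s) = s.
Proof.
elim: m => [|m IH]; first by rewrite leqn0 => /eqP ->; rewrite big_ord0.
rewrite big_ord_recr /= leq_eqVlt => /predU1P[-> | ]; last first.
  by rewrite ltnS => sm; rewrite IH // ltnNge sm addn0.
rewrite (ltnSn m) addn1 (eq_bigr (fun=> 1)) => [|i _]; last by rewrite ltnS ltnW ?ltn_ord.
by rewrite sum1_card card_ord.
Qed.

Lemma nat_parity_ind (P : nat -> Prop) :
  (forall k, P k.*2) -> (forall k, P k.*2.+1) -> forall j, P j.
Proof.
by move=> Peven Podd j; rewrite -[j]odd_double_half; case: odd; rewrite ?add0n.
Qed.

Lemma half_doubleS k : (k.*2.+1)./2 = k.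
Proof. by rewrite -uphalfE uphalf_double. Qed.

Lemma eq_odd_subn a b : b <= a -> (odd a == odd b) = ~~ odd (a - b).
Proof. by move=> ba; rewrite oddB //; case: odd; case: odd. Qed.

(** * Partitions into distinct parts as decreasing lists *)

Definition dpart (l : seq nat) : bool := sorted gtn l && (0 \notin l).

Lemma dpartP l : reflect
  ((forall i, i.+1 < size l -> nth 0 l i.+1 < nth 0 l i) /\
   (forall i, i < size l -> 0 < nth 0 l i)) (dpart l).
Proof.
apply: (iffP andP) => [[/(sortedP 0) dec l0] | [dec pos]]; split => //.
- move=> i /(mem_nth 0) li; rewrite lt0n; apply: contraNneq l0 => li0.
  by rewrite -li0.
- exact/(sortedP 0).
- by apply/(nthP 0) => -[i /pos + li0]; rewrite li0.
Qed.

Lemma dpart_ltn_nth l i j :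
  dpart l -> i < j -> j < size l -> nth 0 l j < nth 0 l i.
Proof.
case/andP=> dec _ ij jl.
by apply: (sorted_ltn_nth gtn_trans 0 dec); rewrite // inE (ltn_trans ij).
Qed.

Lemma dpart_leq_nth l i j :
  dpart l -> i <= j -> j < size l -> nth 0 l j <= nth 0 l i.
Proof.
move=> dl; rewrite leq_eqVlt => /predU1P[-> // | ij jl].
exact/ltnW/dpart_ltn_nth.
Qed.

Definition smallest (l : seq nat) : nat := nth 0 l (size l).-1.

Lemma smallest_gt0 l : dpart l -> l != [::] -> 0 < smallest l.
Proof.
by case/dpartP=> _ pos l_nil; apply: pos; rewrite prednK // lt0n size_eq0.
Qed.

Lemma sorted_rcons_gtn l x :
  sorted gtn (rcons l x) = all (fun y => x < y) l && sorted gtn l.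
Proof.
rewrite -rev_sorted rev_rcons /= (path_sortedE ltn_trans) all_rev rev_sorted.
by congr andb; apply: eq_all.
Qed.

Lemma dpart_rcons1 l : dpart (rcons l 1) = dpart l && (1 \notin l).
Proof.
rewrite /dpart sorted_rcons_gtn mem_rcons inE /=.
have -> : all (fun y => 1 < y) l = (0 \notin l) && (1 \notin l).
  by elim: l => //= x l ->; case: x => [|[|x]]; rewrite ?andbF.
by case: (sorted _ _); case: (0 \in l); case: (1 \in l).
Qed.

Lemma dpart_has1 l : dpart l -> 1 \in l -> exists l', l = rcons l' 1.
Proof.
case/lastP: l => [// | l x]; rewrite /dpart sorted_rcons_gtn !mem_rcons !inE.
case/andP=> /andP[/allP x_min _] x0 /predU1P[<- | /x_min]; first by exists l.
by case: x x0 {x_min}.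
Qed.

(** * Franklin's involution *)

Fixpoint slope (l : seq nat) : nat :=
  if l is x :: t then
    if t is y :: _ then (if x == y.+1 then (slope t).+1 else 1) else 1
  else 0.

Lemma slope_gt0 l : l != [::] -> 0 < slope l.
Proof. by case: l => // x [|y t] //=; case: ifP. Qed.

Lemma slope_le_size l : slope l <= size l.
Proof. by elim: l => // x [|y t] IH //=; case: ifP. Qed.

Lemma nth_slope l i : i.+1 < slope l -> nth 0 l i = (nth 0 l i.+1).+1.
Proof.
elim: l i => // x [|y t] IH i /=; first by case: i.
case: ifP => [/eqP -> | _]; last by case: i.
by case: i => [|i] //=; rewrite ltnS => /IH.
Qed.

Lemma slope_end l :
  slope l < size l -> nth 0 l (slope l).-1 != (nth 0 l (slope l)).+1.
Proof.
elim: l => // x [|y t] IH //.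
have -> : slope [:: x, y & t] = if x == y.+1 then (slope (y :: t)).+1 else 1 by [].
case: ifP => [_ | /negbT //]; rewrite [size _]/= ltnS => /IH.
by have := @slope_gt0 (y :: t) isT; case: (slope _).
Qed.

Lemma slope_ge l k : 0 < k -> k <= size l ->
  (forall i, i.+1 < k -> nth 0 l i = (nth 0 l i.+1).+1) -> k <= slope l.
Proof.
move=> k_gt0 kl run_k; rewrite leqNgt; apply/negP => sk.
have l_nil : l != [::] by rewrite -size_eq0 -lt0n (leq_trans k_gt0).
have := slope_end (leq_trans sk kl).
by rewrite run_k ?prednK ?eqxx ?slope_gt0.
Qed.

Lemma slope_eq l k : 0 < k -> k <= size l ->
  (forall i, i.+1 < k -> nth 0 l i = (nth 0 l i.+1).+1) ->
  (k < size l -> nth 0 l k.-1 != (nth 0 l k).+1) -> slope l = k.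
Proof.
move=> k_gt0 kl run_k end_k; apply/eqP; rewrite eqn_leq slope_ge // andbT.
rewrite leqNgt; apply/negP => ks.
by have := end_k (leq_trans ks (slope_le_size l)); rewrite nth_slope ?prednK ?eqxx.
Qed.

(** The partitions on which neither of Franklin's two moves yields a
    partition into distinct parts. *)
Definition franklin_exceptional (l : seq nat) : bool :=
  (slope l == size l) && ((smallest l == size l) || (smallest l == (size l).+1)).

Definition spread_smallest (l : seq nat) : seq nat :=
  mkseq (fun i => nth 0 l i + (i < smallest l)) (size l).-1.

Definition collect_slope (l : seq nat) : seq nat :=
  mkseq (fun i => if i < size l then nth 0 l i - (i < slope l) else slope l)
        (size l).+1.

Definition franklin (l : seq nat) : seq nat :=
  if (l == [::]) || franklin_exceptional l then l
  else if smallest l <= slope l then spread_smallest l else collect_slope l.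

Section SpreadSmallest.

Variable l : seq nat.
Hypotheses (dl : dpart l) (l_nil : l != [::]) (l_exc : ~~ franklin_exceptional l).
Hypothesis small_le_slope : smallest l <= slope l.
Let r := size l.
Let s := smallest l.

Lemma smallest_lt_size : s < r.
Proof.
have := slope_le_size l; rewrite ltn_neqAle -/r => slope_r.
rewrite (leq_trans small_le_slope slope_r) andbT; apply: contraNneq l_exc => sr.
by rewrite /franklin_exceptional -/s -/r sr eqxx eqn_leq slope_r -sr small_le_slope.
Qed.

Let s_gt0 : 0 < s := smallest_gt0 dl l_nil.
Let s_r := smallest_lt_size.

Lemma size_spread : size (spread_smallest l) = r.-1.
Proof. exact: size_mkseq. Qed.

Lemma nth_spread i : i < r.-1 -> nth 0 (spread_smallest l) i = nth 0 l i + (i < s).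
Proof. by move=> i_r; rewrite nth_mkseq. Qed.

Lemma dpart_spread : dpart (spread_smallest l).
Proof.
case/dpartP: dl => dec pos; apply/dpartP; rewrite size_spread; split => i i_r.
  by rewrite !nth_spread ?(ltnW i_r) //; have := dec i (leq_trans i_r (leq_pred r)); lia.
by rewrite nth_spread //; have := pos i (leq_trans i_r (leq_pred r)); lia.
Qed.

Lemma sumn_spread : sumn (spread_smallest l) = sumn l.
Proof.
rewrite sumn_mkseq (sumn_nth l) -/r big_split /= sum_ltn; last by lia.
by rewrite -[in RHS](prednK (ltn_trans s_gt0 s_r)) big_ord_recr.
Qed.

Lemma head_spread : nth 0 (spread_smallest l) 0 = (nth 0 l 0).+1.
Proof. by rewrite nth_spread ?s_gt0 ?addn1 //; lia. Qed.

Lemma slope_spread : slope (spread_smallest l) = s.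
Proof.
case/dpartP: dl => dec _.
apply: slope_eq => //; rewrite ?size_spread; first by lia.
  move=> i i_s; rewrite !nth_spread; try lia.
  by rewrite (@nth_slope l i) ?(leq_trans i_s small_le_slope) //; lia.
move=> s_r1; rewrite !nth_spread; try lia.
by have := dec s.-1; rewrite prednK // => /(_ (leq_trans s_r1 (leq_pred _))); lia.
Qed.

Lemma smallest_spread : s < smallest (spread_smallest l).
Proof.
case/dpartP: dl => dec _.
rewrite /smallest size_spread nth_spread; last by lia.
have := dec r.-2; rewrite -/r (_ : r.-2.+1 = r.-1); last by lia.
by move=> /(_ ltac:(lia)); rewrite -/(smallest l) -/s; lia.
Qed.

Lemma franklin_spread : franklin (spread_smallest l) = l.
Proof.
have spread_nil : (spread_smallest l == [::]) = false.
  by apply/negbTE; rewrite -size_eq0 size_spread; lia.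
have spread_exc : franklin_exceptional (spread_smallest l) = false.
  rewrite /franklin_exceptional slope_spread size_spread; apply/negbTE/nandP.
  have [sr | ] := eqVneq s r.-1; last by left.
  right; rewrite /smallest size_spread nth_spread; last by lia.
  have := @dpart_ltn_nth l r.-2 r.-1 dl; rewrite -/r.
  by move=> /(_ ltac:(lia) ltac:(lia)); rewrite -/(smallest l) -/s; lia.
rewrite /franklin spread_nil spread_exc slope_spread leqNgt smallest_spread /=.
apply: (@eq_from_nth _ 0); first by rewrite size_mkseq size_spread; lia.
move=> i; rewrite size_mkseq size_spread => i_r.
rewrite nth_mkseq ?size_spread // slope_spread.
case: ifP => [i_r1 | /negbT]; first by rewrite nth_spread //; lia.
by rewrite -leqNgt => r1_i; rewrite (_ : i = r.-1) //; lia.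
Qed.

End SpreadSmallest.

Section CollectSlope.

Variable l : seq nat.
Hypotheses (dl : dpart l) (l_nil : l != [::]) (l_exc : ~~ franklin_exceptional l).
Hypothesis slope_lt_small : slope l < smallest l.
Let r := size l.
Let s := smallest l.
Let g := slope l.

Let g_gt0 : 0 < g := slope_gt0 l_nil.
Let g_r : g <= r := slope_le_size l.

Lemma smallest_le_nth i : i < r -> s <= nth 0 l i.
Proof. by move=> i_r; apply: dpart_leq_nth => //; rewrite -/r; lia. Qed.

Lemma slope_lt_size_or_smallest_gt : g < r \/ r.+1 < s.
Proof.
move: g_r; rewrite leq_eqVlt => /predU1P[gr | ]; last by left.
right; move: l_exc slope_lt_small; rewrite /franklin_exceptional -/g -/r -/s gr eqxx /=.
lia.
Qed.

Lemma size_collect : size (collect_slope l) = r.+1.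
Proof. exact: size_mkseq. Qed.

Lemma nth_collect i : i < r -> nth 0 (collect_slope l) i = nth 0 l i - (i < g).
Proof. by move=> i_r; rewrite nth_mkseq ?i_r // ltnW. Qed.

Lemma nth_collect_size : nth 0 (collect_slope l) r = g.
Proof. by rewrite nth_mkseq // ltnn. Qed.

Lemma smallest_collect : smallest (collect_slope l) = g.
Proof. by rewrite /smallest size_collect nth_collect_size. Qed.

Lemma dpart_collect : dpart (collect_slope l).
Proof.
have gs := slope_lt_small; rewrite -/g -/s in gs.
(* Non-exceptionality is needed only here: when the slope is all of [l], the
   old smallest part, lowered by 1, must stay above the new part [g]. *)
have gr_or := slope_lt_size_or_smallest_gt.
case/dpartP: dl => dec pos; apply/dpartP; rewrite size_collect; split => i.
  rewrite ltnS leq_eqVlt => /predU1P[ir | i_r].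
    have li : nth 0 l i = s by rewrite /s /smallest -/r -ir.
    rewrite ir nth_collect_size nth_collect; last lia.
    by rewrite li; case: gr_or; lia.
  rewrite !nth_collect ?(ltnW i_r) //.
  have := dec i i_r; have := smallest_le_nth (ltnW i_r).
  case: (ltngtP i.+1 g) => [| | ig]; try lia.
  by have := @slope_end l; rewrite -/g -/r -ig /= => /(_ ltac:(lia)); lia.
rewrite ltnS leq_eqVlt => /predU1P[-> | i_r].
  by rewrite nth_collect_size.
by rewrite nth_collect //; have := smallest_le_nth i_r; lia.
Qed.

Lemma sumn_collect : sumn (collect_slope l) = sumn l.
Proof.
rewrite sumn_mkseq big_ord_recr /= ltnn (sumn_nth l) -/r -/g.
rewrite -[X in _ + X = _](sum_ltn g_r) -big_split /=.
apply: eq_bigr => i _; rewrite ltn_ord subnK //.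
by have := smallest_le_nth (ltn_ord i); move: slope_lt_small; rewrite -/g -/s; lia.
Qed.

Lemma head_collect : nth 0 (collect_slope l) 0 = (nth 0 l 0).-1.
Proof. by rewrite nth_collect ?g_gt0 ?subn1 // lt0n size_eq0. Qed.

Lemma slope_collect : g <= slope (collect_slope l).
Proof.
apply: slope_ge; rewrite ?size_collect //; first lia.
move=> i i_g; rewrite !nth_collect; try lia.
rewrite (@nth_slope l i) //.
by have := @smallest_le_nth i.+1 ltac:(lia); move: slope_lt_small; rewrite -/g -/s; lia.
Qed.

Lemma franklin_collect : franklin (collect_slope l) = l.
Proof.
have collect_nil : (collect_slope l == [::]) = false.
  by apply/negbTE; rewrite -size_eq0 size_collect.
have collect_exc : franklin_exceptional (collect_slope l) = false.
  rewrite /franklin_exceptional smallest_collect size_collect.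
  by apply/negbTE/nandP; right; apply/negP => /orP[] /eqP; lia.
rewrite /franklin collect_nil collect_exc smallest_collect slope_collect /=.
apply: (@eq_from_nth _ 0); first by rewrite size_mkseq size_collect.
move=> i; rewrite size_mkseq size_collect => i_r.
rewrite nth_mkseq ?size_collect // smallest_collect nth_collect //.
by have := smallest_le_nth i_r; move: slope_lt_small; rewrite -/g -/s; lia.
Qed.

End CollectSlope.

Lemma franklin_id l : (l == [::]) || franklin_exceptional l -> franklin l = l.
Proof. by rewrite /franklin => ->. Qed.

Lemma franklin_moved l : dpart l -> ~~ ((l == [::]) || franklin_exceptional l) ->
  [/\ dpart (franklin l), sumn (franklin l) = sumn l, franklin (franklin l) = l,
      odd (size (franklin l)) = ~~ odd (size l) &
      odd (nth 0 (franklin l) 0) = ~~ odd (nth 0 l 0)].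
Proof.
move=> dl; rewrite negb_or => /andP[l_nil l_exc].
have -> : franklin l = if smallest l <= slope l then spread_smallest l else collect_slope l.
  by rewrite /franklin (negbTE l_nil) (negbTE l_exc).
case: ifP => [s_g | /negbT].
  split; rewrite ?dpart_spread ?sumn_spread ?franklin_spread ?head_spread //=.
    rewrite size_spread //; case: (size l) (smallest_lt_size l_exc s_g) => // r _.
    by rewrite /= negbK.
rewrite -ltnNge => g_s.
split; rewrite ?dpart_collect ?sumn_collect ?franklin_collect ?size_collect //=.
rewrite head_collect //; case/dpartP: dl => _ /(_ 0); rewrite lt0n size_eq0 l_nil.
by case: (nth 0 l 0) => [/(_ isT) | k _] //=; rewrite negbK.
Qed.

Lemma dpart_franklin l : dpart l -> dpart (franklin l).
Proof.
move=> dl; have [/franklin_id -> // | moved] := boolP ((l == [::]) || franklin_exceptional l).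
by case: (franklin_moved dl moved).
Qed.

Lemma sumn_franklin l : dpart l -> sumn (franklin l) = sumn l.
Proof.
move=> dl; have [/franklin_id -> // | moved] := boolP ((l == [::]) || franklin_exceptional l).
by case: (franklin_moved dl moved).
Qed.

Lemma franklinK l : dpart l -> franklin (franklin l) = l.
Proof.
move=> dl; have [fixed | moved] := boolP ((l == [::]) || franklin_exceptional l).
  by rewrite !franklin_id.
by case: (franklin_moved dl moved).
Qed.

Lemma franklin_fixed l :
  dpart l -> (franklin l == l) = (l == [::]) || franklin_exceptional l.
Proof.
move=> dl; have [fixed | moved] := boolP ((l == [::]) || franklin_exceptional l).
  by rewrite franklin_id ?eqxx.
case: (franklin_moved dl moved) => _ _ _ odd_size _.
by apply/negbTE/eqP => fl; move: odd_size; rewrite fl; case: odd.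
Qed.

Lemma odd_franklin l : dpart l -> franklin l != l ->
  odd (size (franklin l)) = ~~ odd (size l) /\
  odd (nth 0 (franklin l) 0) = ~~ odd (nth 0 l 0).
Proof.
move=> dl; rewrite franklin_fixed // => moved.
by case: (franklin_moved dl moved).
Qed.

(** * Staircases and generalized pentagonal numbers *)

(** Franklin's exceptional partitions are the staircases [j; j-1; ...] with
    (j+1)/2 parts; their sums [gpent j] enumerate the generalized pentagonal
    numbers in increasing order. *)
Definition staircase (j : nat) : seq nat := mkseq (fun i => j - i) (j.+1)./2.

Definition gpent (j : nat) : nat := sumn (staircase j).

Lemma size_staircase j : size (staircase j) = (j.+1)./2.
Proof. exact: size_mkseq. Qed.

Lemma nth_staircase j i : i < (j.+1)./2 -> nth 0 (staircase j) i = j - i.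
Proof. by move=> i_j; rewrite nth_mkseq. Qed.

Lemma head_staircase j : nth 0 (staircase j) 0 = j.
Proof. by case: j => // j; rewrite nth_staircase ?subn0. Qed.

Lemma dpart_staircase j : dpart (staircase j).
Proof.
by apply/dpartP; rewrite size_staircase; split => i i_j; rewrite !nth_staircase; lia.
Qed.

Lemma staircase_exceptional j :
  (staircase j == [::]) || franklin_exceptional (staircase j).
Proof.
case: j => [//|j]; apply/orP; right.
have full : slope (staircase j.+1) = size (staircase j.+1).
  apply: slope_eq; rewrite ?size_staircase //; try lia.
  by move=> i i_j; rewrite !nth_staircase; lia.
rewrite /franklin_exceptional full eqxx /smallest size_staircase nth_staircase; last lia.
by case: (boolP (odd j)) => j_odd; apply/orP; [right | left]; apply/eqP; lia.
Qed.

Lemma nth_full_slope l : slope l = size l -> forall k, k < size l ->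
  nth 0 l ((size l).-1 - k) = smallest l + k.
Proof.
move=> full; elim=> [|k IH] k_l; first by rewrite subn0 addn0.
rewrite (@nth_slope l ((size l).-1 - k.+1)); last by rewrite full; lia.
rewrite (_ : ((size l).-1 - k.+1).+1 = (size l).-1 - k); last lia.
by rewrite IH ?addnS //; lia.
Qed.

Lemma exceptional_staircase l :
  franklin_exceptional l -> exists j, l = staircase j.
Proof.
case/andP=> /eqP full small.
exists (if smallest l == size l then (size l).*2.-1 else (size l).*2).
apply: (@eq_from_nth _ 0) => [|i]; first by rewrite size_staircase; case: ifP; lia.
move=> i_l; rewrite nth_staircase; last by case: ifP; lia.
have := nth_full_slope full (k := (size l).-1 - i) ltac:(lia).
rewrite (_ : _ - (_ - i) = i); last lia.
by move=> ->; move: small; case: eqP => [-> _ | _ /= /eqP ->]; lia.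
Qed.

Lemma gpentS j : gpent j.+1 = gpent j + (if odd j then (j.+1)./2 else j.+1).
Proof.
rewrite /gpent /staircase !sumn_mkseq.
case: (boolP (odd j)) => j_odd.
  rewrite (_ : (j.+2)./2 = (j.+1)./2); last by move: j_odd; lia.
  rewrite -[X in _ = _ + X]card_ord -sum1_card -big_split /=.
  by apply: eq_bigr => i _; have := ltn_ord i; lia.
rewrite (_ : (j.+2)./2 = ((j.+1)./2).+1); last by move: j_odd; lia.
rewrite big_ord_recl subn0 addnC; apply/eqP; rewrite eqn_add2r.
by apply/eqP/eq_bigr => i _; rewrite lift0 subSS.
Qed.

Lemma gpent_ltS j : gpent j < gpent j.+1.
Proof. by rewrite gpentS; case: ifP; lia. Qed.

Lemma leq_gpent : {mono gpent : i j / i <= j}.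
Proof.
apply: leq_mono; apply: homo_ltn => [|j]; [exact: ltn_trans | exact: gpent_ltS].
Qed.

Lemma ltn_gpent i j : (gpent i < gpent j) = (i < j).
Proof. by rewrite !ltnNge leq_gpent. Qed.

Lemma gpent_inj : injective gpent.
Proof. exact: incn_inj leq_gpent. Qed.

Lemma gpent_ge j : j <= gpent j.
Proof. by elim: j => // j IH; apply: leq_ltn_trans IH (gpent_ltS j). Qed.

Lemma gpent_between_notpent n j :
  gpent j < n < gpent j.+1 -> forall i, gpent i != n.
Proof.
by move=> /andP[lo hi] i; apply/eqP => ein; move: lo hi; rewrite -ein !ltn_gpent; lia.
Qed.

Lemma gpent_interval_ind (P : nat -> nat -> Prop) :
  P 0 0 ->
  (forall n j, gpent j < n.+1 < gpent j.+1 -> P n j -> P n.+1 j) ->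
  (forall n j, gpent j.+1 = n.+1 -> P n j -> P n.+1 j.+1) ->
  forall n j, gpent j <= n < gpent j.+1 -> P n j.
Proof.
move=> P00 Pin Pat; elim=> [|n IH] j /andP[lo hi].
  by rewrite (_ : j = 0) //; have := gpent_ge j; lia.
have [lo' | ] := leqP (gpent j) n; first by apply: Pin; [lia | apply: IH; lia].
case: j lo hi => [|j] lo hi hi'; first by rewrite ltn0 in hi'.
have at_n : gpent j.+1 = n.+1 by lia.
by apply: Pat => //; apply: IH; rewrite hi' andbT -ltnS -at_n gpent_ltS.
Qed.

Lemma gpent_double k :
  2 * gpent k.*2 = k * (3 * k + 1) /\ 2 * gpent k.*2.+1 = k.+1 * (3 * k + 2).
Proof.
elim: k => [|k [IHeven IHodd]]; first by [].
have ev : gpent (k.+1).*2 = gpent k.*2.+1 + k.+1.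
  by rewrite doubleS gpentS /= odd_double /=; lia.
have od : gpent (k.+1).*2.+1 = gpent (k.+1).*2 + (k.+1).*2.+1.
  by rewrite gpentS odd_double.
by rewrite od ev; split; nia.
Qed.

(** [pent_index m] is the position of [pent m] in the increasing enumeration
    [gpent]: [m = k >= 0] gives [2k] and [m = -(k+1)] gives [2k+1]. *)
Definition pent_index (m : int) : nat :=
  match m with Posz k => k.*2 | Negz k => k.*2.+1 end.

Definition pent_root (j : nat) : int := if odd j then Negz j./2 else Posz j./2.

Lemma pent_rootK : cancel pent_root pent_index.
Proof. by move=> j; rewrite /pent_root -[in RHS](odd_double_half j); case: odd. Qed.

Lemma pent_gpent m : pent m = gpent (pent_index m).
Proof.
rewrite /pent; case: m => k; have [ev od] := gpent_double k.
  rewrite (_ : (Posz k * (3 * Posz k + 1))%R = Posz (2 * gpent k.*2)); last lia.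
  by rewrite absz_nat mulKn.
rewrite (_ : (Negz k * (3 * Negz k + 1))%R = Posz (2 * gpent k.*2.+1)); last first.
  by rewrite NegzE; lia.
by rewrite absz_nat mulKn.
Qed.

Section PartsOfSet.

Variable n : nat.
Implicit Types A : {set 'I_n.+1}.

Definition parts A : seq nat := rev [seq k <- iota 0 n.+1 | inord k \in A].

Lemma mem_parts A k : (k \in parts A) = (k <= n) && (inord k \in A).
Proof. by rewrite mem_rev mem_filter mem_iota add0n ltnS andbC. Qed.

Lemma mem_parts_ord A (i : 'I_n.+1) : (val i \in parts A) = (i \in A).
Proof. by rewrite mem_parts inord_val -ltnS ltn_ord. Qed.

Lemma sorted_parts A : sorted gtn (parts A).
Proof.
rewrite rev_sorted; apply: sorted_filter; first exact: ltn_trans.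
exact: iota_ltn_sorted.
Qed.

Lemma big_parts (R : Type) (idx : R) (op : Monoid.com_law idx) (F : nat -> R) A :
  \big[op/idx]_(i in A) F (val i) = \big[op/idx]_(k <- parts A) F k.
Proof.
rewrite /parts big_rev big_filter.
rewrite -[iota 0 n.+1]/(index_iota 0 n.+1) big_mkord.
by apply: eq_bigl => i; rewrite inord_val.
Qed.

Lemma parts_inj : injective parts.
Proof. by move=> A B eqAB; apply/setP => i; rewrite -!mem_parts_ord eqAB. Qed.

Lemma sumn_parts A : sumn (parts A) = \sum_(i in A) (i : nat).
Proof. by rewrite sumnE -big_parts. Qed.

End PartsOfSet.

Definition dpartitions (n : nat) : seq (seq nat) :=
  [seq parts A | A <- enum [set A : {set 'I_n.+1} | distinct_partition A]].

Lemma mem_dpartitions n l : (l \in dpartitions n) = dpart l && (sumn l == n).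
Proof.
apply/mapP/andP => [[A] | [dl /eqP sum_l]].
  rewrite mem_enum inE => /andP[A0 /eqP sumA] ->; split; last by rewrite sumn_parts sumA.
  rewrite /dpart sorted_parts mem_parts /=.
  by have -> : inord 0 = ord0 :> 'I_n.+1 by apply/val_inj/inordK.
pose A := [set i : 'I_n.+1 | val i \in l].
have partsA : parts A = l.
  apply: (irr_sorted_eq gtn_trans (fun x => ltnn x) (sorted_parts A)); first by case/andP: dl.
  move=> k; rewrite mem_parts inE; have [k_n | ] := boolP (k <= n); first by rewrite /= inordK.
  move=> k_n; apply/esym/negbTE; apply: contra k_n => k_l.
  by rewrite -sum_l (perm_sumn (perm_to_rem k_l)) leq_addr.
exists A => //; rewrite mem_enum !inE /distinct_partition -sumn_parts partsA sum_l eqxx.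
by rewrite inE andbT; case/andP: dl.
Qed.

Lemma dpart_dpartitions n l : l \in dpartitions n -> dpart l.
Proof. by rewrite mem_dpartitions => /andP[]. Qed.

Lemma uniq_dpartitions n : uniq (dpartitions n).
Proof. by rewrite map_inj_uniq ?enum_uniq //; apply: parts_inj. Qed.

Lemma dpartitions0 : perm_eq (dpartitions 0) [:: [::]].
Proof.
apply: uniq_perm; rewrite ?uniq_dpartitions // => l; rewrite mem_dpartitions inE.
apply/andP/eqP => [[/dpartP[_ pos]] | -> //].
by case: l pos => // x l /(_ 0 isT); rewrite /= addn_eq0; case: x.
Qed.

Lemma franklin_dpartitions n l : l \in dpartitions n -> franklin l \in dpartitions n.
Proof.
by rewrite !mem_dpartitions => /andP[dl sum_l]; rewrite dpart_franklin ?sumn_franklin.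
Qed.

Lemma perm_franklin_fixed n :
  perm_eq [seq l <- dpartitions n | franklin l == l]
          [seq staircase j | j <- iota 0 n.+1 & gpent j == n].
Proof.
apply: uniq_perm; first by rewrite filter_uniq ?uniq_dpartitions.
  rewrite map_inj_in_uniq ?filter_uniq ?iota_uniq // => i j _ _ eq_ij.
  by rewrite -(head_staircase i) eq_ij head_staircase.
move=> l; rewrite mem_filter mem_dpartitions; apply/andP/mapP => [[] | [j]].
  move=> fixed_l /andP[dl /eqP sum_l]; have [j def_l] : exists j, l = staircase j.
    move: fixed_l; rewrite franklin_fixed // => /orP[/eqP -> | /exceptional_staircase //].
    by exists 0.
  exists j => //; rewrite mem_filter mem_iota add0n ltnS -sum_l def_l eqxx.
  exact: gpent_ge.
rewrite mem_filter => /andP[/eqP <- _] ->.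
by rewrite franklin_id ?staircase_exceptional ?dpart_staircase ?eqxx.
Qed.

(** * Signed sums over partitions *)

Local Open Scope ring_scope.

Lemma signr_double (R : pzRingType) k : (-1) ^+ k.*2 = 1 :> R.
Proof. by rewrite -signr_odd odd_double. Qed.

Lemma signr_flip (R : pzRingType) (a b : nat) :
  odd b = ~~ odd a -> (-1) ^+ b = - (-1) ^+ a :> R.
Proof.
move=> ba; rewrite -signr_odd ba -[in RHS]signr_odd.
by case: odd; rewrite /= ?expr0 ?expr1 ?opprK.
Qed.

Lemma card_sub_card_sign (T : finType) (P b : pred T) :
  Posz #|[set x | P x & ~~ b x]| - Posz #|[set x | P x & b x]| =
  \sum_(x | P x) (-1) ^+ b x.
Proof.
rewrite (bigID b) /= addrC; congr (_ + _).
  rewrite (eq_bigr (fun=> 1)) => [|x /andP[_ /negbTE ->] //].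
  by rewrite sumr_const natz; congr Posz; apply: eq_card => x; rewrite inE.
rewrite (eq_bigr (fun=> -1)) => [|x /andP[_ ->] //].
by rewrite sumrN sumr_const natz; congr (- Posz _); apply: eq_card => x; rewrite inE.
Qed.

Lemma big_sign_reversing_involution (R : numDomainType) (T : eqType)
    (s : seq T) (f : T -> T) (w : T -> R) :
  uniq s -> {in s, forall x, f x \in s} -> {in s, forall x, f (f x) = x} ->
  {in s, forall x, f x != x -> w (f x) = - w x} ->
  \sum_(x <- s) w x = \sum_(x <- s | f x == x) w x.
Proof.
move=> s_uniq f_s fK w_f; rewrite (bigID (fun x => f x == x)) /=.
set moved := [seq x <- s | f x != x].
have f_moved : {in moved, forall x, f x \in moved}.
  by move=> x; rewrite !mem_filter => /andP[fx xs]; rewrite f_s // fK // eq_sym fx.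
have perm_f : perm_eq [seq f x | x <- moved] moved.
  apply: uniq_perm; rewrite ?filter_uniq //.
    rewrite map_inj_in_uniq ?filter_uniq // => x y.
    by rewrite !mem_filter => /andP[_ xs] /andP[_ ys] fxy; rewrite -(fK x) // fxy fK.
  move=> y; apply/mapP/idP => [[x /f_moved fx ->] // | ym].
  by exists (f y); rewrite ?f_moved //; move: ym; rewrite mem_filter => /andP[_ /fK].
set S := \sum_(x <- s | f x != x) w x.
have SN : S = - S.
  rewrite /S -big_filter -[in LHS](perm_big _ perm_f) big_map -sumrN.
  by apply: eq_big_seq => x; rewrite mem_filter => /andP[fx xs]; apply: w_f.
suff /eqP -> : S == 0 by rewrite addr0.
by rewrite -[S == 0]orFb -(mulrn_eq0 S 2) mulr2n {1}SN addNr.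
Qed.

Lemma big_dpartitions_has1 (R : nmodType) n (F : seq nat -> R) :
  \sum_(l <- dpartitions n.+1 | 1%N \in l) F l =
  \sum_(l <- dpartitions n | 1%N \notin l) F (rcons l 1%N).
Proof.
rewrite -big_filter -[RHS]big_filter -[RHS](big_map (rcons^~ 1%N) xpredT).
apply/perm_big/uniq_perm; first by rewrite filter_uniq ?uniq_dpartitions.
  by rewrite (map_inj_uniq (@rcons_injl _ 1%N)) filter_uniq ?uniq_dpartitions.
move=> l; rewrite mem_filter mem_dpartitions; apply/andP/mapP => [[l1 /andP[dl sum_l]] | ].
  have [l' def_l] := dpart_has1 dl l1; exists l' => //.
  move: dl sum_l; rewrite def_l dpart_rcons1 sumn_rcons addn1 eqSS => /andP[dl' l1'] sum_l'.
  by rewrite mem_filter l1' mem_dpartitions dl'.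
case=> l'; rewrite mem_filter mem_dpartitions => /andP[l1' /andP[dl' /eqP sum_l']] ->.
by rewrite mem_rcons mem_head dpart_rcons1 dl' l1' sumn_rcons sum_l' addn1 eqxx.
Qed.

Definition crank_sign (l : seq nat) : int :=
  if 1%N \in l then (-1) ^+ size l else (-1) ^+ nth 0%N l 0%N.

Lemma odd_absz_subn2 a : odd `|Posz a - 2| = odd a.
Proof.
case: a => [|[|a]] //; rewrite (_ : Posz a.+2 - 2 = Posz a) /= ?negbK //.
by rewrite -addn2 PoszD addrK.
Qed.

Lemma sign_dcrank n (A : {set 'I_n.+1}) :
  (-1) ^+ odd `|dcrank A| = crank_sign (parts A).
Proof.
have has_oneE : has_one A = (1%N \in parts A).
  rewrite mem_parts; apply/existsP/andP => [[i /andP[iA /eqP i1]] | [n_gt0 oneA]].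
    by rewrite -ltnS -i1 ltn_ord inord_val.
  by exists (inord 1); rewrite oneA /= inordK.
have cardE : #|A| = size (parts A).
  by rewrite -sum1_card -sum1_size (big_parts _ (fun=> 1%N)).
have largestE : largest_part A = nth 0%N (parts A) 0%N.
  rewrite /largest_part (big_parts _ id); case: (parts A) (sorted_parts A) => [|x t] /=.
    by rewrite big_nil.
  rewrite big_cons => /(order_path_min gtn_trans)/allP x_max.
  by apply/maxn_idPl/bigmax_leqP_seq => y /x_max /ltnW.
rewrite /dcrank /crank_sign has_oneE; case: ifP => _; last by rewrite largestE signr_odd.
by rewrite odd_absz_subn2 cardE signr_odd.
Qed.

Lemma Me_sub_Mo n :
  Posz (Me n) - Posz (Mo n) = \sum_(l <- dpartitions n) crank_sign l.
Proof.
rewrite card_sub_card_sign big_map big_enum /=.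
by apply: eq_big => [A | A _]; rewrite ?inE ?sign_dcrank.
Qed.

Section FranklinSums.

Variables (R : numDomainType) (F : seq nat -> R).
Hypothesis F_franklin : forall l, dpart l -> franklin l != l -> F (franklin l) = - F l.

Lemma big_dpartitions_franklin n :
  \sum_(l <- dpartitions n) F l =
  \sum_(j <- iota 0 n.+1 | gpent j == n) F (staircase j).
Proof.
rewrite (big_sign_reversing_involution (f := franklin)) ?uniq_dpartitions //.
- by rewrite -big_filter (perm_big _ (perm_franklin_fixed n)) big_map big_filter.
- exact: franklin_dpartitions.
- by move=> l /dpart_dpartitions/franklinK.
- by move=> l /dpart_dpartitions/F_franklin.
Qed.

Lemma big_dpartitions_gpent j :
  \sum_(l <- dpartitions (gpent j)) F l = F (staircase j).
Proof.
rewrite big_dpartitions_franklin (eq_bigl (pred1 j)) => [|i]; last first.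
  by rewrite /= (inj_eq gpent_inj).
rewrite -big_filter filter_pred1_uniq ?iota_uniq ?big_seq1 //.
by rewrite mem_iota add0n ltnS gpent_ge.
Qed.

Lemma big_dpartitions_notpent n :
  (forall j, gpent j != n) -> \sum_(l <- dpartitions n) F l = 0.
Proof.
by move=> notpent; rewrite big_dpartitions_franklin big_pred0 // => j; apply/negbTE.
Qed.

End FranklinSums.

Definition sgn_largest (n : nat) : int :=
  \sum_(l <- dpartitions n) (-1) ^+ nth 0%N l 0%N.

Definition sgn_size (n : nat) : int :=
  \sum_(l <- dpartitions n) (-1) ^+ size l.

Definition sgn_largest_no1 (n : nat) : int :=
  \sum_(l <- dpartitions n | 1%N \notin l) (-1) ^+ nth 0%N l 0%N.

Definition sgn_size_no1 (n : nat) : int :=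
  \sum_(l <- dpartitions n | 1%N \notin l) (-1) ^+ size l.

Lemma sgn_largest_franklin l : dpart l -> franklin l != l ->
  (-1) ^+ nth 0%N (franklin l) 0%N = - (-1) ^+ nth 0%N l 0%N :> int.
Proof. by move=> dl moved; apply: signr_flip; case: (odd_franklin dl moved). Qed.

Lemma sgn_size_franklin l : dpart l -> franklin l != l ->
  (-1) ^+ size (franklin l) = - (-1) ^+ size l :> int.
Proof. by move=> dl moved; apply: signr_flip; case: (odd_franklin dl moved). Qed.

Lemma sgn_largest_gpent j : sgn_largest (gpent j) = (-1) ^+ j.
Proof.
by rewrite /sgn_largest big_dpartitions_gpent ?head_staircase //; apply: sgn_largest_franklin.
Qed.

Lemma sgn_size_gpent j : sgn_size (gpent j) = (-1) ^+ (j.+1)./2.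
Proof.
by rewrite /sgn_size big_dpartitions_gpent ?size_staircase //; apply: sgn_size_franklin.
Qed.

Lemma sgn_largest_notpent n : (forall j, gpent j != n) -> sgn_largest n = 0.
Proof. by apply: big_dpartitions_notpent; apply: sgn_largest_franklin. Qed.

Lemma sgn_size_notpent n : (forall j, gpent j != n) -> sgn_size n = 0.
Proof. by apply: big_dpartitions_notpent; apply: sgn_size_franklin. Qed.

Lemma sgn_largest_no1_0 : sgn_largest_no1 0 = 1.
Proof. by rewrite /sgn_largest_no1 (perm_big _ dpartitions0) big_cons big_nil /= addr0. Qed.

Lemma sgn_size_no1_0 : sgn_size_no1 0 = 1.
Proof. by rewrite /sgn_size_no1 (perm_big _ dpartitions0) big_cons big_nil /= addr0. Qed.

Lemma sgn_sizeS n : sgn_size n.+1 = sgn_size_no1 n.+1 - sgn_size_no1 n.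
Proof.
rewrite /sgn_size (bigID (fun l => 1%N \in l)) big_dpartitions_has1 addrC -sumrN /=.
by congr (_ + _); apply: eq_bigr => l _; rewrite size_rcons exprS mulN1r.
Qed.

(** The empty partition of [0] is the only one whose largest part changes
    when the part 1 is adjoined, from 0 to 1. *)
Lemma sgn_largestS n :
  sgn_largest n.+1 = sgn_largest_no1 n.+1 + sgn_largest_no1 n - (n == 0%N)%:R *+ 2.
Proof.
rewrite /sgn_largest (bigID (fun l => 1%N \in l)) big_dpartitions_has1 /=.
rewrite addrC -addrA; congr (_ + _); case: n => [|n].
  by rewrite sgn_largest_no1_0 (perm_big _ dpartitions0) big_cons big_nil.
rewrite subr0 /sgn_largest_no1 -!(big_filter _ (fun l => 1%N \notin l)).
apply: eq_big_seq => l; rewrite mem_filter mem_dpartitions => /andP[_ /andP[_ sum_l]].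
by rewrite nth_rcons; case: l sum_l.
Qed.

Lemma crank_sumS n :
  \sum_(l <- dpartitions n.+1) crank_sign l = sgn_largest_no1 n.+1 - sgn_size_no1 n.
Proof.
rewrite (bigID (fun l => 1%N \in l)) addrC big_dpartitions_has1 -sumrN /=.
congr (_ + _); apply: eq_bigr => l l1; rewrite /crank_sign.
  by rewrite mem_rcons mem_head size_rcons exprS mulN1r.
by rewrite (negbTE l1).
Qed.

(** * Closed forms *)

(** The values of [sgn_size_no1 n] and of [(-1)^(n - gpent j) sgn_largest_no1 n]
    for [gpent j <= n < gpent j.+1]. *)
Definition sgn_size_no1_on (j : nat) : int :=
  if odd j then 0 else (-1) ^+ j./2.

Definition sgn_largest_no1_on (j : nat) : int :=
  if odd j then (-1) ^+ j./2 - 1 else (j == 0%N)%:R *+ 2 - (-1) ^+ j./2.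

Lemma sgn_size_no1_on_double k : sgn_size_no1_on k.*2 = (-1) ^+ k.
Proof. by rewrite /sgn_size_no1_on odd_double doubleK. Qed.

Lemma sgn_size_no1_on_doubleS k : sgn_size_no1_on k.*2.+1 = 0.
Proof. by rewrite /sgn_size_no1_on oddS odd_double. Qed.

Lemma sgn_largest_no1_on_double k :
  sgn_largest_no1_on k.*2 = (k == 0%N)%:R *+ 2 - (-1) ^+ k.
Proof. by rewrite /sgn_largest_no1_on odd_double doubleK double_eq0. Qed.

Lemma sgn_largest_no1_on_doubleS k : sgn_largest_no1_on k.*2.+1 = (-1) ^+ k - 1.
Proof. by rewrite /sgn_largest_no1_on oddS odd_double half_doubleS. Qed.

Lemma sgn_size_no1_onS j :
  sgn_size_no1_on j.+1 = sgn_size_no1_on j + (-1) ^+ (j.+2)./2.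
Proof.
elim/nat_parity_ind: j => k; rewrite -?doubleS ?half_doubleS ?doubleK.
  by rewrite sgn_size_no1_on_double sgn_size_no1_on_doubleS exprS mulN1r addrN.
by rewrite sgn_size_no1_on_double sgn_size_no1_on_doubleS add0r.
Qed.

Lemma sgn_largest_no1_onS j :
  sgn_largest_no1_on j.+1 =
  (-1) ^+ j.+1 - (-1) ^+ ((gpent j.+1).-1 - gpent j)%N * sgn_largest_no1_on j
  + (j == 0%N)%:R *+ 2.
Proof.
rewrite gpentS (_ : (gpent j + _).-1 - gpent j = (if odd j then (j.+1)./2 else j.+1).-1)%N;
  last by case: ifP; lia.
elim/nat_parity_ind: j => k.
  rewrite odd_double sgn_largest_no1_on_double sgn_largest_no1_on_doubleS.
  by rewrite signr_double exprS signr_double double_eq0 /=; ring.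
rewrite oddS odd_double /= -doubleS doubleK.
rewrite sgn_largest_no1_on_double sgn_largest_no1_on_doubleS exprS signr_double.
by rewrite -signr_odd; case: odd.
Qed.

Lemma sgn_size_no1E n j :
  (gpent j <= n < gpent j.+1)%N -> sgn_size_no1 n = sgn_size_no1_on j.
Proof.
move: n j; apply: gpent_interval_ind; first exact: sgn_size_no1_0.
  move=> n j /gpent_between_notpent notpent <-.
  by have := sgn_sizeS n; rewrite sgn_size_notpent // => /eqP; rewrite eq_sym subr_eq0 => /eqP.
move=> n j at_n IH.
by rewrite sgn_size_no1_onS -IH -(sgn_size_gpent j.+1) at_n sgn_sizeS addrC subrK.
Qed.

Lemma sgn_largest_no1E n j : (gpent j <= n < gpent j.+1)%N ->
  sgn_largest_no1 n = (-1) ^+ (n - gpent j)%N * sgn_largest_no1_on j.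
Proof.
move: n j; apply: gpent_interval_ind; first by rewrite sgn_largest_no1_0 mul1r.
  move=> n j between IH.
  have n_gt0 : (0 < n)%N.
    case: n between {IH} => // /andP[lo hi].
    have j0 : j = 0%N by have := gpent_ge j; lia.
    by move: hi; rewrite j0.
  have := sgn_largestS n.
  rewrite sgn_largest_notpent; last exact: gpent_between_notpent between.
  rewrite (gtn_eqF n_gt0) subr0 => /eqP; rewrite eq_sym addr_eq0 => /eqP ->.
  by rewrite IH subSn ?exprS ?mulN1r ?mulNr //; lia.
move=> n j at_n IH.
rewrite at_n subnn mul1r sgn_largest_no1_onS at_n succnK -IH.
have -> : (j == 0%N) = (n == 0%N).
  case: j at_n {IH} => [[<-] // | j at_n]; apply/esym/negbTE.
  by rewrite -lt0n -ltnS -at_n (ltn_gpent 1).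
by rewrite -(sgn_largest_gpent j.+1) at_n sgn_largestS; ring.
Qed.

Lemma crank_sum_gpent j : (0 < j)%N ->
  \sum_(l <- dpartitions (gpent j)) crank_sign l =
  sgn_largest_no1_on j - sgn_size_no1_on j.-1.
Proof.
case: j => // j _; have gp_gt0 := leq_ltn_trans (leq0n _) (gpent_ltS j).
rewrite -(prednK gp_gt0) crank_sumS prednK // (@sgn_largest_no1E _ j.+1);
  last by rewrite leqnn gpent_ltS.
by rewrite subnn mul1r (@sgn_size_no1E _ j) //; have := gpent_ltS j; lia.
Qed.

Lemma crank_sum_between n j : (gpent j < n < gpent j.+1)%N ->
  \sum_(l <- dpartitions n) crank_sign l =
  (-1) ^+ (n - gpent j)%N * sgn_largest_no1_on j - sgn_size_no1_on j.
Proof.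
case: n => [|n] between; first by case/andP: between; rewrite ltn0.
by rewrite crank_sumS (@sgn_largest_no1E _ j) ?(@sgn_size_no1E _ j) //; lia.
Qed.

Lemma crank_sum_pent m : (0 < pent m)%N ->
  \sum_(l <- dpartitions (pent m)) crank_sign l =
  if (0 < m) && odd `|m| then 1 else -1.
Proof.
rewrite pent_gpent; case: m => [[|k] | k] /= pent_gt0 //.
  rewrite crank_sum_gpent ?double_gt0 // sgn_largest_no1_on_double doubleS.
  rewrite sgn_size_no1_on_doubleS subr0 exprS mulN1r opprK -signr_odd /=.
  by case: odd.
by rewrite crank_sum_gpent // sgn_largest_no1_on_doubleS sgn_size_no1_on_double; ring.
Qed.

Lemma crank_sum_after_pent m n : (pent m < n < gpent (pent_index m).+1)%N ->
  \sum_(l <- dpartitions n) crank_sign l =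
  if [&& odd `|m|, 0 < m & odd n == odd (pent m)] then 2
  else if [&& ~~ odd `|m|, 0 < m & odd n == odd (pent m)] then -2
  else if ~~ odd `|m| && (m < 0) then - 2 * (-1) ^+ (n - pent m)
  else 0.
Proof.
rewrite pent_gpent => between; rewrite (crank_sum_between between).
rewrite eq_odd_subn; last by case/andP: between => /ltnW.
rewrite -[(-1) ^+ (n - _)]signr_odd.
case: m between => [[|k] | k] between.
- by case/andP: between => lo hi; move: (lo : (0 < n)%N) (hi : (n < 1)%N); lia.
- rewrite [pent_index _]/= sgn_largest_no1_on_double sgn_size_no1_on_double absz_nat !ltz_nat.
  by rewrite -[(-1) ^+ k.+1]signr_odd oddS; case: (odd k); case: (odd (n - _)).
rewrite [pent_index _]/= sgn_largest_no1_on_doubleS sgn_size_no1_on_doubleS.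
rewrite (_ : `|Negz k|%N = k.+1) // oddS -[(-1) ^+ k]signr_odd.
by case: (odd k); case: (odd (n - _)).
Qed.

Theorem theorem1p7 (n : nat) (hn : (0 < n)%N) :
  let d : int := (Posz (Me n) - Posz (Mo n))%R in
  (* n in P, with R(n) = m *)
  (forall m : int, n = pent m ->
     d = (if (0 < m)%R && odd `|m|%N then 1 else -1)%R) /\
  (* n not in P, floor_p(n) = pent m, i.e. R(floor_p n) = m *)
  ((~ exists m : int, n = pent m) ->
   forall m : int, (pent m <= n)%N ->
     (forall m' : int, (pent m' <= n)%N -> (pent m' <= pent m)%N) ->
     d = (if [&& odd `|m|%N, (0 < m)%R & odd n == odd (pent m)] then 2
          else if [&& ~~ odd `|m|%N, (0 < m)%R & odd n == odd (pent m)] then -2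
          else if ~~ odd `|m|%N && (m < 0)%R then - 2 * (-1) ^+ (n - pent m)
          else 0)%R).
Proof.
move=> d; rewrite /d Me_sub_Mo; split => [m n_pent | notpent m m_le m_max].
  by rewrite n_pent crank_sum_pent // -n_pent.
apply: crank_sum_after_pent; rewrite ltn_neqAle m_le andbT; apply/andP; split.
  by apply/eqP => n_pent; apply: notpent; exists m.
rewrite ltnNge; apply/negP => next_le.
have := m_max (pent_root (pent_index m).+1); rewrite !pent_gpent pent_rootK.
by move=> /(_ next_le); rewrite leqNgt gpent_ltS.
Qed.
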